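(* Let $f:\mathbb{R}^N\to[0,\infty)$ be symmetrizable, $f(x)=\phi(h(x'),x_N)$, let $K$ be the Wulff shape of $f$ and $K_h\subset\mathbb{R}^{N-1}$ the Wulff shape of $h$. Then there exists $\alpha:\mathbb{R}\to[0,\infty)$, concave on $\{t:\alpha(t)>0\}$, such that (i) $K_t=\emptyset$ for every $t$ with $\alpha(t)=0$, and (ii) $K_t=\alpha(t)K_h$ for every $t$ with $\alpha(t)\neq 0$. Conversely, let $f:\mathbb{R}^N\to[0,\infty)$ be lower-semicontinuous, convex, positively $1$-homogeneous with $f(x)>0$ for $x\neq 0$, and suppose there exist an open convex set $K_h\subset\mathbb{R}^{N-1}$ and a function $\alpha:\mathbb{R}\to[0,\infty)$, concave on $\{t:\alpha(t)>0\}$, such that the Wulff shape $K$ of $f$ satisfies (i) and (ii). Then $f$ is symmetrizable.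
   Context: Let $N\ge 2$ and write $x=(x',x_N)\in\mathbb{R}^{N-1}\times\mathbb{R}$. For $E\subset\mathbb{R}^N$ and $t\in\mathbb{R}$, $E_t:=\{x'\in\mathbb{R}^{N-1}:(x',t)\in E\}$. For a convex, positively $1$-homogeneous $g:\mathbb{R}^k\to[0,\infty)$ with $g(y)>0$ for $y\neq0$, its Wulff shape is $K_g:=\bigcap_{\nu\in S^{k-1}}\{y\in\mathbb{R}^k:y\cdot\nu<g(\nu)\}$. A convex, positively $1$-homogeneous $f:\mathbb{R}^N\to[0,\infty)$ with $f(x)>0$ for $x\ne0$ is called symmetrizable if there exist lower-semicontinuous functions $h:\mathbb{R}^{N-1}\to[0,\infty)$ and $\phi:[0,\infty)\times\mathbb{R}\to[0,\infty)$ such that $h$ is positively $1$-homogeneous, convex, with $h(x')>0$ for $x'\neq0$, $\phi$ is convex, and $f(x)=\phi(h(x'),x_N)$ for all $x\in\mathbb{R}^N$. *)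

From Stdlib Require Import Reals.
From mathcomp Require Import all_boot.
Set Implicit Arguments.
Unset Strict Implicit.

Local Open Scope R_scope.

Definition vec (k : nat) := 'I_k -> R.

Definition vadd k (x y : vec k) : vec k := fun i => x i + y i.
Definition vscal k (a : R) (x : vec k) : vec k := fun i => a * x i.
Definition vsub k (x y : vec k) : vec k := fun i => x i - y i.
Definition vzero k : vec k := fun _ => 0.

Definition dot k (x y : vec k) : R := \big[Rplus/0]_(i < k) (x i * y i).
Definition vnorm k (x : vec k) : R := sqrt (dot x x).

Definition unit_sphere k (nu : vec k) : Prop := dot nu nu = 1.

Definition nonneg_fun k (g : vec k -> R) : Prop := forall y, 0 <= g y.

Definition convex_fun k (g : vec k -> R) : Prop :=
  forall (x y : vec k) (l : R), 0 <= l <= 1 ->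
    g (vadd (vscal l x) (vscal (1 - l) y)) <= l * g x + (1 - l) * g y.

Definition pos_homogeneous k (g : vec k -> R) : Prop :=
  forall (t : R) (x : vec k), 0 < t -> g (vscal t x) = t * g x.

Definition positive_off_zero k (g : vec k -> R) : Prop :=
  forall x : vec k, x <> @vzero k -> 0 < g x.

Definition lsc_fun k (g : vec k -> R) : Prop :=
  forall (x : vec k) (eps : R), 0 < eps ->
    exists delta, 0 < delta /\
      forall y, vnorm (vsub y x) < delta -> g x - eps < g y.

(* Functions phi : [0,oo) x R -> R, modelled as R -> R -> R restricted to s >= 0 *)
Definition nonneg_fun2 (phi : R -> R -> R) : Prop :=
  forall s t, 0 <= s -> 0 <= phi s t.

Definition convex_fun2 (phi : R -> R -> R) : Prop :=
  forall s1 t1 s2 t2 l, 0 <= s1 -> 0 <= s2 -> 0 <= l <= 1 ->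
    phi (l * s1 + (1 - l) * s2) (l * t1 + (1 - l) * t2)
      <= l * phi s1 t1 + (1 - l) * phi s2 t2.

Definition lsc_fun2 (phi : R -> R -> R) : Prop :=
  forall s t eps, 0 <= s -> 0 < eps ->
    exists delta, 0 < delta /\
      forall s' t', 0 <= s' -> Rabs (s' - s) < delta -> Rabs (t' - t) < delta ->
        phi s t - eps < phi s' t'.

Definition Wulff k (g : vec k -> R) (y : vec k) : Prop :=
  forall nu : vec k, unit_sphere nu -> dot y nu < g nu.

(* Splitting R^(n+1) = R^n x R : x = (x', x_N) *)
Definition xprime n (x : vec n.+1) : vec n :=
  fun j => x (widen_ord (leqnSn n) j).
Definition xlast n (x : vec n.+1) : R := x ord_max.
Definition join n (x' : vec n) (t : R) : vec n.+1 :=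
  fun i => match (insub (val i) : option 'I_n) with
           | Some j => x' j
           | None => t
           end.

Definition slice n (E : vec n.+1 -> Prop) (t : R) (x' : vec n) : Prop :=
  E (join x' t).

Definition open_vset k (A : vec k -> Prop) : Prop :=
  forall y, A y -> exists r, 0 < r /\ forall z, vnorm (vsub z y) < r -> A z.
Definition convex_vset k (A : vec k -> Prop) : Prop :=
  forall x y l, A x -> A y -> 0 <= l <= 1 -> A (vadd (vscal l x) (vscal (1 - l) y)).

Definition concave_on_pos (alpha : R -> R) : Prop :=
  forall s t l, 0 < alpha s -> 0 < alpha t -> 0 <= l <= 1 ->
    l * alpha s + (1 - l) * alpha t <= alpha (l * s + (1 - l) * t).

Definition symmetrizable n (f : vec n.+1 -> R) : Prop :=
  nonneg_fun f /\ convex_fun f /\ pos_homogeneous f /\ positive_off_zero f /\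
  exists (h : vec n -> R) (phi : R -> R -> R),
    lsc_fun h /\ nonneg_fun h /\ pos_homogeneous h /\ convex_fun h /\
    positive_off_zero h /\
    lsc_fun2 phi /\ nonneg_fun2 phi /\ convex_fun2 phi /\
    forall x : vec n.+1, f x = phi (h (xprime x)) (xlast x).

Definition slices_scaled n (K : vec n.+1 -> Prop) (Kh : vec n -> Prop)
    (alpha : R -> R) : Prop :=
  (forall t, alpha t = 0 -> forall x', ~ slice K t x') /\
  (forall t, alpha t <> 0 -> forall x',
      slice K t x' <-> exists y, Kh y /\ x' = vscal (alpha t) y).

(* Whenever the slice [K_t] is nonempty, [(0, t)] lies in [K]: [h] takes the
   same value at [nu] and at a positive multiple of [-nu], so every normal can be flipped to
   one on which [(x', t)] does no better than [(0, t)].  Put [alpha(t)] := the largest [c]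
   with [c sig + t s <= phi(sig, s)] for all [sig > 0]; it is concave, since a convex
   combination of such slopes at heights [s] and [t] is one at the combined height.  For
   [(x', t)] in [K] and [nu <> 0] the slope [x'.nu / h(nu)] is a strict minorant slope, and a
   strict minorant slope of the lower semicontinuous homogeneous [phi] can be raised by a
   uniform margin (compactness on a bounded interval, linear growth outside it), so it is
   below [alpha(t)].  Hence [K_t] is contained in [alpha(t) K_h]; the converse inclusion is
   immediate from the definition of [alpha].

   Converse.  [f] is the support function of [K] (finite-dimensional Hahn-Banach), and [K] is
   the union of the sets [alpha(t) K_h x {t}]; so [f(x', t)] depends on [x'] only through the
   support function of [K_h] at [x'], which is determined by [h(x') := f(x', 0)].  With
   [h(e) = 1], [phi(s, t) := f(s e, t)] then symmetrizes [f]. *)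

From Stdlib Require Import Reals Lra Classical ClassicalEpsilon FunctionalExtensionality.
From mathcomp Require Import all_boot.
From HB Require Import structures.
Set Implicit Arguments.
Unset Strict Implicit.
Local Open Scope R_scope.

HB.instance Definition _ := Monoid.isComLaw.Build R 0 Rplus
  (fun a b c => esym (Rplus_assoc a b c)) Rplus_comm Rplus_0_l.

Ltac vec_ext := apply: functional_extensionality => ?; rewrite /vadd /vsub /vscal /vzero.

Lemma dot_scal_l k a (x y : vec k) : dot (vscal a x) y = a * dot x y.
Proof. rewrite /dot /vscal; elim/big_rec2: _ => [|i u v _ ->]; ring. Qed.

Lemma dot_comm k (x y : vec k) : dot x y = dot y x.
Proof. by apply: eq_bigr => i _; rewrite Rmult_comm. Qed.

Lemma dot_scal_r k a (x y : vec k) : dot x (vscal a y) = a * dot x y.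
Proof. by rewrite dot_comm dot_scal_l dot_comm. Qed.

Lemma dot_add_l k (x y z : vec k) : dot (vadd x y) z = dot x z + dot y z.
Proof. rewrite /dot /vadd; elim/big_rec3: _ => [|i u v w _ ->]; ring. Qed.

Lemma dot_zero_l k (x : vec k) : dot (@vzero k) x = 0.
Proof. rewrite /dot /vzero; elim/big_rec: _ => [|i u _ ->]; ring. Qed.

Lemma dot_zero_r k (x : vec k) : dot x (@vzero k) = 0.
Proof. by rewrite dot_comm dot_zero_l. Qed.

Lemma dot_self_ge0 k (x : vec k) : 0 <= dot x x.
Proof.
rewrite /dot; elim/big_rec: _ => [|i u _ Hu]; first lra.
have := Rle_0_sqr (x i); rewrite /Rsqr; lra.
Qed.

Lemma dot_self_gt0 k (x : vec k) : x <> @vzero k -> 0 < dot x x.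
Proof.
move=> x_neq0; have [i xi_neq0] : exists i, x i <> 0.
  apply: NNPP => all0; apply: x_neq0; apply: functional_extensionality => i.
  by apply: NNPP => xi_neq0; apply: all0; exists i.
rewrite /dot (bigD1 i) //=; apply: Rplus_lt_le_0_compat.
  by have := Rsqr_pos_lt _ xi_neq0; rewrite /Rsqr.
elim/big_rec: _ => [|j u _ Hu]; first lra.
have := Rle_0_sqr (x j); rewrite /Rsqr; lra.
Qed.

Lemma vnorm_scal k c (x : vec k) : vnorm (vscal c x) = Rabs c * vnorm x.
Proof.
rewrite /vnorm dot_scal_l dot_scal_r -Rmult_assoc sqrt_mult_alt; last nra.
by rewrite -sqrt_Rsqr_abs.
Qed.

Lemma pos_homogeneous_zero k (g : vec k -> R) : pos_homogeneous g -> g (@vzero k) = 0.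
Proof.
move=> g_hom; have E : vscal 2 (@vzero k) = @vzero k by vec_ext; ring.
have := g_hom 2 (@vzero k) ltac:(lra); rewrite E; lra.
Qed.

Lemma convex_hom_subadditive k (g : vec k -> R) :
  convex_fun g -> pos_homogeneous g -> forall x y, g (vadd x y) <= g x + g y.
Proof.
move=> g_cvx g_hom x y.
have -> : vadd x y = vscal 2 (vadd (vscal (1/2) x) (vscal (1 - 1/2) y)) by vec_ext; field.
rewrite g_hom; last lra.
have := g_cvx x y (1/2) ltac:(lra); lra.
Qed.

Lemma Wulff_iff_dot_lt k (g : vec k -> R) (y : vec k) : pos_homogeneous g ->
  Wulff g y <-> forall nu, nu <> @vzero k -> dot y nu < g nu.
Proof.
move=> g_hom; split=> [Ky nu nu_neq0|Ky nu nu1]; last first.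
  apply: Ky => nu0; move: nu1; rewrite /unit_sphere nu0 dot_zero_l; lra.
have nu_gt0 := dot_self_gt0 nu_neq0; set r := sqrt (dot nu nu).
have r_gt0 : 0 < r by apply: sqrt_lt_R0.
have rr : r * r = dot nu nu by apply: sqrt_sqrt; lra.
have nu1 : unit_sphere (vscal (/ r) nu).
  by rewrite /unit_sphere dot_scal_l dot_scal_r -rr; field; lra.
have := Ky _ nu1; rewrite dot_scal_r g_hom; last exact: Rinv_0_lt_compat.
by apply: Rmult_lt_reg_l; apply: Rinv_0_lt_compat.
Qed.

Lemma Wulff_dot_le k (g : vec k -> R) y : pos_homogeneous g -> Wulff g y ->
  forall nu, dot y nu <= g nu.
Proof.
move=> g_hom Ky nu; case: (classic (nu = @vzero k)) => [->|nu_neq0].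
  by rewrite dot_zero_r pos_homogeneous_zero //; lra.
by apply: Rlt_le; apply: (proj1 (Wulff_iff_dot_lt y g_hom)).
Qed.

Section Splitting.
Variable n : nat.
Implicit Types (a b : vec n) (x y : vec n.+1).

Lemma join_widen a s (j : 'I_n) : join a s (widen_ord (leqnSn n) j) = a j.
Proof.
rewrite /join; case: insubP => [k _ Ek|]; last by rewrite /= ltn_ord.
by congr (a _); apply: val_inj; rewrite Ek.
Qed.

Lemma xprime_join a s : xprime (join a s) = a.
Proof. by apply: functional_extensionality => j; apply: join_widen. Qed.

Lemma xlast_join a s : xlast (join a s) = s.
Proof. by rewrite /xlast /join insubF //= ltnn. Qed.

Lemma join_xprime_xlast x : join (xprime x) (xlast x) = x.
Proof.
apply: functional_extensionality => i; rewrite /join.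
case: insubP => [j _ Ej|i_ge_n]; first by congr (x _); apply: val_inj; rewrite /= Ej.
congr (x _); apply: val_inj => /=; apply/eqP.
by rewrite eqn_leq leqNgt i_ge_n -ltnS ltn_ord.
Qed.

Lemma vec_split_ext x y : xprime x = xprime y -> xlast x = xlast y -> x = y.
Proof. by move=> E1 E2; rewrite -(join_xprime_xlast x) -(join_xprime_xlast y) E1 E2. Qed.

Lemma dot_join a b s t : dot (join a s) (join b t) = dot a b + s * t.
Proof.
rewrite /dot big_ord_recr /= -!/(xlast _) !xlast_join; congr (_ + _).
by apply: eq_bigr => i _; rewrite !join_widen.
Qed.

Lemma join_lin l m a b s t : join (vadd (vscal l a) (vscal m b)) (l * s + m * t)
  = vadd (vscal l (join a s)) (vscal m (join b t)).
Proof.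
apply: vec_split_ext; rewrite ?xprime_join ?xlast_join.
  by apply: functional_extensionality => j; rewrite /xprime /vadd /vscal !join_widen.
by rewrite /xlast /vadd /vscal -!/(xlast _) !xlast_join.
Qed.

Lemma join_scal l a s : join (vscal l a) (l * s) = vscal l (join a s).
Proof.
have := join_lin l 0 a a s s; rewrite Rmult_0_l Rplus_0_r.
have E : forall m (v : vec m), vadd (vscal l v) (vscal 0 v) = vscal l v by move=> m v; vec_ext; ring.
by rewrite !E.
Qed.

Lemma join_zero : join (@vzero n) 0 = @vzero n.+1.
Proof. by apply: vec_split_ext; rewrite ?xprime_join ?xlast_join. Qed.

Lemma join_eq_zero a s : join a s = @vzero n.+1 -> a = @vzero n /\ s = 0.
Proof.
move=> E; split; last by rewrite -(xlast_join a s) E.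
by rewrite -(xprime_join a s) E; apply: functional_extensionality.
Qed.

Lemma join_neq0_l a s : a <> @vzero n -> join a s <> @vzero n.+1.
Proof. by move=> a_neq0 /join_eq_zero []. Qed.

Lemma join_neq0_r a s : s <> 0 -> join a s <> @vzero n.+1.
Proof. by move=> s_neq0 /join_eq_zero []. Qed.

Lemma join_sub a b s t : vsub (join a s) (join b t) = join (vsub a b) (s - t).
Proof.
apply: vec_split_ext; rewrite ?xprime_join ?xlast_join.
  by apply: functional_extensionality => j; rewrite /xprime /vsub !join_widen.
by rewrite /xlast /vsub -!/(xlast _) !xlast_join.
Qed.

Lemma vnorm_join_le a s : vnorm (join a s) <= vnorm a + Rabs s.
Proof.
rewrite /vnorm dot_join.
have a_ge0 := dot_self_ge0 a; have aa := sqrt_sqrt _ a_ge0.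
have sa_ge0 := sqrt_pos (dot a a); have s_ge0 := Rabs_pos s.
have ss : Rabs s * Rabs s = s * s by rewrite -Rabs_mult Rabs_right; nra.
rewrite -(sqrt_square (sqrt (dot a a) + Rabs s)); last lra.
apply: sqrt_le_1_alt; nra.
Qed.

Lemma vnorm_join0 a : vnorm (join a 0) = vnorm a.
Proof. by rewrite /vnorm dot_join Rmult_0_l Rplus_0_r. Qed.

End Splitting.

Section SublinearSubgradient.
Variables (k : nat) (p : vec k -> R).
Hypotheses (p_subadd : forall x y, p (vadd x y) <= p x + p y) (p_hom : pos_homogeneous p).
Variable nu : vec k.

Lemma sublinear_opp x : - p x <= p (vscal (-1) x).
Proof.
have E : vadd x (vscal (-1) x) = @vzero k by vec_ext; ring.
by have := p_subadd x (vscal (-1) x); rewrite E pos_homogeneous_zero //; lra.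
Qed.

Definition supported_below j (c : vec k) := forall i : 'I_k, (j <= i)%N -> c i = 0.

(* [y] encodes the functional [a nu + c |-> a p(nu) + c.y] on the span of [nu] and the first
   [j] coordinate vectors; quantifying over all pairs [(a, c)] sidesteps its well-definedness. *)
Definition dominated_extension j (y : vec k) := forall a c, supported_below j c ->
  a * p nu + dot c y <= p (vadd (vscal a nu) c).

Lemma dominated_extension0 : dominated_extension 0 (@vzero k).
Proof.
move=> a c c0; have -> : c = @vzero k by apply: functional_extensionality => i; apply: c0.
have -> : vadd (vscal a nu) (@vzero k) = vscal a nu by vec_ext; ring.
rewrite dot_zero_l Rplus_0_r.
case: (Rtotal_order a 0) => [a_lt0|[->|a_gt0]]; last by rewrite p_hom //; lra.
- have -> : vscal a nu = vscal (- a) (vscal (-1) nu) by vec_ext; ring.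
  by rewrite p_hom; [have := sublinear_opp nu; nra | lra].
- have -> : vscal 0 nu = @vzero k by vec_ext; ring.
  by rewrite pos_homogeneous_zero //; lra.
Qed.

Section ExtensionStep.
Variables (j : nat) (y : vec k).
Hypotheses (j_lt_k : (j < k)%N) (y_dom : dominated_extension j y).
Let J : 'I_k := Ordinal j_lt_k.
Let e : vec k := fun i => if i == J then 1 else 0.
Let L a c := a * p nu + dot c y.
Let gap a c s := p (vadd (vadd (vscal a nu) c) (vscal s e)) - L a c.

Lemma supported_below_add c1 c2 :
  supported_below j c1 -> supported_below j c2 -> supported_below j (vadd c1 c2).
Proof. by move=> H1 H2 i ji; rewrite /vadd H1 ?H2 //; ring. Qed.

Lemma supported_below_scal a c : supported_below j c -> supported_below j (vscal a c).
Proof. by move=> H i ji; rewrite /vscal H //; ring. Qed.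

Lemma supported_below_split c : supported_below j.+1 c ->
  exists c0, supported_below j c0 /\ c = vadd c0 (vscal (c J) e).
Proof.
move=> Hc; exists (fun i => if i == J then 0 else c i); split.
  move=> i ji; case: eqP => // /eqP iJ; apply: Hc.
  by rewrite ltn_neqAle ji andbT; apply: contra iJ => /eqP ij; apply/eqP/val_inj.
by vec_ext; rewrite /e; case: eqP => [->|_]; ring.
Qed.

Lemma gap_scal r a c s : 0 < r ->
  gap (a / r) (vscal (/ r) c) s = / r * gap a c (r * s).
Proof.
move=> r_gt0; rewrite /gap /L dot_scal_l.
have -> : vadd (vadd (vscal (a / r) nu) (vscal (/ r) c)) (vscal s e)
    = vscal (/ r) (vadd (vadd (vscal a nu) c) (vscal (r * s) e)) by vec_ext; field; lra.
by rewrite p_hom; [field | apply: Rinv_0_lt_compat]; lra.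
Qed.

Lemma extension_slope : exists m, forall a c, supported_below j c ->
  - gap a c (-1) <= m /\ m <= gap a c 1.
Proof.
have gap_sep a1 c1 a2 c2 : supported_below j c1 -> supported_below j c2 ->
    - gap a1 c1 (-1) <= gap a2 c2 1.
  move=> H1 H2; have := y_dom (a1 + a2) (supported_below_add H1 H2).
  have := p_subadd (vadd (vadd (vscal a1 nu) c1) (vscal (-1) e))
                   (vadd (vadd (vscal a2 nu) c2) (vscal 1 e)).
  have -> : vadd (vadd (vadd (vscal a1 nu) c1) (vscal (-1) e))
                 (vadd (vadd (vscal a2 nu) c2) (vscal 1 e))
      = vadd (vscal (a1 + a2) nu) (vadd c1 c2) by vec_ext; ring.
  by rewrite /gap /L dot_add_l; lra.
pose lower r := exists a c, supported_below j c /\ r = - gap a c (-1).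
have lower_bounded : bound lower.
  by exists (gap 0 (@vzero k) 1) => r [a [c [Hc ->]]]; apply: gap_sep.
have [m [m_ub m_lub]] := completeness lower lower_bounded
  (ex_intro _ _ (ex_intro _ 0 (ex_intro _ (@vzero k) (conj (fun _ _ => erefl) erefl)))).
exists m => a c Hc; split; first by apply: m_ub; exists a, c.
by apply: m_lub => r [a1 [c1 [Hc1 ->]]]; apply: gap_sep.
Qed.

Lemma dominated_extension_step : exists y', dominated_extension j.+1 y'.
Proof.
have [m m_sep] := extension_slope.
exists (fun i => if i == J then m else y i) => a c /supported_below_split [c0 [Hc0 ->]].
have -> : dot (vadd c0 (vscal (c J) e)) (fun i => if i == J then m else y i)
    = dot c0 y + c J * m.
  rewrite dot_add_l dot_scal_l; congr (_ + _ * _).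
    by apply: eq_bigr => i _; case: eqP => [->|//]; rewrite (Hc0 J (leqnn j)); ring.
  rewrite /dot (bigD1 J) //= big1 => [|i /negbTE iJ]; rewrite /e ?eqxx ?iJ; ring.
have gapE : gap a c0 (c J) = p (vadd (vscal a nu) (vadd c0 (vscal (c J) e))) - L a c0.
  by rewrite /gap; congr (p _ - _); vec_ext; ring.
suff : c J * m <= gap a c0 (c J) by rewrite gapE /L; lra.
case: (Rtotal_order (c J) 0) => [cJ_lt0|[->|cJ_gt0]].
- set r := - c J; have r_gt0 : 0 < r by rewrite /r; lra.
  have [lower _] := m_sep (a / r) _ (supported_below_scal (/ r) Hc0).
  move: lower; rewrite gap_scal // (_ : r * -1 = c J); last by rewrite /r; ring.
  move=> /(Rmult_le_compat_r r _ _ (Rlt_le _ _ r_gt0)).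
  have -> : - (/ r * gap a c0 (c J)) * r = - gap a c0 (c J) by field; lra.
  by rewrite /r; lra.
- have := y_dom a Hc0; rewrite /gap /L.
  have -> : vadd (vadd (vscal a nu) c0) (vscal 0 e) = vadd (vscal a nu) c0 by vec_ext; ring.
  lra.
- have [_ upper] := m_sep (a / c J) _ (supported_below_scal (/ c J) Hc0).
  move: upper; rewrite gap_scal // Rmult_1_r.
  move=> /(Rmult_le_compat_l (c J) _ _ (Rlt_le _ _ cJ_gt0)).
  by have -> : c J * (/ c J * gap a c0 (c J)) = gap a c0 (c J) by field; lra.
Qed.

End ExtensionStep.

Lemma sublinear_subgradient : exists y, (forall mu, dot y mu <= p mu) /\ dot y nu = p nu.
Proof.
have ext j : (j <= k)%N -> exists y, dominated_extension j y.
  elim: j => [|j IHj] j_le; first by exists (@vzero k); apply: dominated_extension0.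
  by have [y y_dom] := IHj (ltnW j_le); apply: (dominated_extension_step j_le y_dom).
have [y y_dom] := ext k (leqnn k).
have supp c : supported_below k c by move=> i; rewrite leqNgt ltn_ord.
have y_le mu : dot y mu <= p mu.
  have := y_dom 0 mu (supp mu).
  have -> : vadd (vscal 0 nu) mu = mu by vec_ext; ring.
  by rewrite dot_comm; lra.
exists y; split=> //; apply: Rle_antisym => //.
have := y_dom 1 (vscal (-1) nu) (supp _).
have -> : vadd (vscal 1 nu) (vscal (-1) nu) = @vzero k by vec_ext; ring.
by rewrite pos_homogeneous_zero // dot_scal_l dot_comm; lra.
Qed.

End SublinearSubgradient.

Lemma Wulff_dot_approx k (g : vec k -> R) : convex_fun g -> pos_homogeneous g ->
  positive_off_zero g -> forall nu eps, 0 < eps -> exists y, Wulff g y /\ g nu - eps < dot y nu.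
Proof.
move=> g_cvx g_hom g_pos nu eps eps_gt0.
have [y [y_le y_nu]] :=
  sublinear_subgradient (convex_hom_subadditive g_cvx g_hom) g_hom nu.
have g_nu : 0 <= g nu.
  case: (classic (nu = @vzero k)) => [->|/g_pos]; last lra.
  by rewrite pos_homogeneous_zero //; lra.
set l := g nu / (g nu + eps).
have l_ge0 : 0 <= l by apply: Rmult_le_pos; [|apply/Rlt_le/Rinv_0_lt_compat]; lra.
have l_lt1 : l < 1 by apply: (Rmult_lt_reg_r (g nu + eps)); [|rewrite /l; field_simplify]; lra.
exists (vscal l y); split.
  apply/(Wulff_iff_dot_lt _ g_hom) => mu /g_pos; rewrite dot_scal_l.
  by have := y_le mu; nra.
rewrite dot_scal_l y_nu /l; apply: (Rmult_lt_reg_r (g nu + eps)); first lra.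
by field_simplify; [nra | lra].
Qed.

Lemma lsc_pos_lower_bound (g : R -> R) a b : a <= b ->
  (forall x, a <= x <= b -> 0 < g x) ->
  (forall x, a <= x <= b -> forall eps, 0 < eps ->
     exists d, 0 < d /\ forall y, Rabs (y - x) < d -> g x - eps < g y) ->
  exists eta, 0 < eta /\ forall x, a <= x <= b -> eta <= g x.
Proof.
move=> a_le_b g_pos g_lsc.
(* [E] holds up to the supremum [m]; lower semicontinuity at [m] pushes it past [m] unless
   [m = b]. *)
pose E x := x <= b /\ exists eta, 0 < eta /\ forall y, a <= y <= x -> eta <= g y.
suff [_ Eb] : E b by [].
have Ea : E a.
  split=> //; exists (g a); split; first by apply: g_pos; lra.
  move=> y ya; have -> : y = a by lra.
  exact: Rle_refl.
have [m [m_ub m_lub]] := completeness E (ex_intro _ b (fun x Ex => proj1 Ex)) (ex_intro _ a Ea).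
have a_le_m : a <= m by apply: m_ub.
have m_le_b : m <= b by apply: m_lub => x [].
have gm_pos : 0 < g m by apply: g_pos; lra.
have [d [d_gt0 near_m]] := g_lsc m (conj a_le_m m_le_b) (g m / 2) ltac:(lra).
have [x [[_ [eta [eta_gt0 eta_le]]] x_gt]] : exists x, E x /\ m - d < x.
  apply: NNPP => none; suff : m <= m - d by lra.
  by apply: m_lub => x Ex; apply: Rnot_lt_le => x_gt; apply: none; exists x.
pose x2 := Rmin b (m + d / 2).
have Ex2 : E x2.
  split; first exact: Rmin_l.
  exists (Rmin eta (g m / 2)); split; first by apply: Rmin_glb_lt; lra.
  move=> y y_le; case: (Rle_or_lt y x) => [y_le_x|y_gt_x].
    by apply: Rle_trans (Rmin_l _ _) _; apply: eta_le; lra.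
  apply: Rle_trans (Rmin_r _ _) _.
  have y_le' : y <= m + d / 2 by apply: Rle_trans (Rmin_r b _); apply y_le.
  have /near_m : Rabs (y - m) < d by apply: Rabs_def1; lra.
  lra.
have : x2 <= m by apply: m_ub.
case: (Rle_or_lt b (m + d / 2)) => [b_le|b_gt]; last by rewrite /x2 Rmin_right; lra.
by move: Ex2; rewrite /x2 Rmin_left.
Qed.

Definition pos_homogeneous2 (phi : R -> R -> R) :=
  forall l s t, 0 < l -> 0 <= s -> phi (l * s) (l * t) = l * phi s t.

Lemma lsc_hom_superlinear (phi : R -> R -> R) t C :
  lsc_fun2 phi -> pos_homogeneous2 phi -> t < phi 0 1 ->
  exists S, forall s, S <= s -> C + t * s <= phi 1 s.
Proof.
move=> phi_lsc phi_hom t_lt; set q := (phi 0 1 - t) / 2.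
have [d [d_gt0 near01]] := phi_lsc 0 1 q (Rle_refl 0) ltac:(rewrite /q; lra).
exists (Rmax (2 / d) (C / q)) => s s_ge.
have s_ge1 := Rle_trans _ _ _ (Rmax_l _ _) s_ge; have s_ge2 := Rle_trans _ _ _ (Rmax_r _ _) s_ge.
have q_gt0 : 0 < q by rewrite /q; lra.
have s_gt0 : 0 < s by apply: Rlt_le_trans s_ge1; apply: Rdiv_lt_0_compat; lra.
have inv_s : 0 < / s < d.
  split; first exact: Rinv_0_lt_compat.
  apply: (Rmult_lt_reg_l s) => //; rewrite Rinv_r; last lra.
  by move: s_ge1; rewrite /Rdiv; have := Rinv_r d; nra.
have Hphi : phi 0 1 - q < phi (/ s) 1.
  by apply: near01; rewrite ?Rminus_0_r ?Rminus_diag ?Rabs_R0 ?Rabs_right; lra.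
have -> : phi 1 s = s * phi (/ s) 1 by rewrite -phi_hom; [congr phi; field|..]; lra.
have : C / q * q <= s * q by apply: Rmult_le_compat_r; lra.
have -> : C / q * q = C by field; lra.
rewrite /q in Hphi *; nra.
Qed.

Lemma lsc_fun2_reflect (phi : R -> R -> R) :
  lsc_fun2 phi -> lsc_fun2 (fun s r => phi s (- r)).
Proof.
move=> phi_lsc s r eps s_ge0 eps_gt0.
have [d [d_gt0 near]] := phi_lsc s (- r) eps s_ge0 eps_gt0.
exists d; split=> // s' r' s'_ge0 ds dr; apply: near => //.
by rewrite -Rabs_Ropp; have -> : - (- r' - - r) = r' - r by ring.
Qed.

Lemma pos_homogeneous2_reflect (phi : R -> R -> R) :
  pos_homogeneous2 phi -> pos_homogeneous2 (fun s r => phi s (- r)).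
Proof. by move=> phi_hom l s r l_gt0 s_ge0; rewrite -phi_hom //; congr phi; ring. Qed.

Lemma lsc_fun2_slice_affine (phi : R -> R -> R) c t x eps : lsc_fun2 phi -> 0 < eps ->
  exists d, 0 < d /\ forall y, Rabs (y - x) < d ->
    phi 1 x - c - t * x - eps < phi 1 y - c - t * y.
Proof.
move=> phi_lsc eps_gt0; have [d [d_gt0 near]] := phi_lsc 1 x (eps / 2) ltac:(lra) ltac:(lra).
have abst_gt0 : 0 < Rabs t + 1 by have := Rabs_pos t; lra.
exists (Rmin d (eps / (2 * (Rabs t + 1)))); split.
  by apply: Rmin_glb_lt => //; apply: Rdiv_lt_0_compat; lra.
move=> y yx; have yd := Rlt_le_trans _ _ _ yx (Rmin_l _ _).
have yt := Rlt_le_trans _ _ _ yx (Rmin_r _ _).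
have := near 1 y ltac:(lra) ltac:(rewrite Rminus_diag Rabs_R0; lra) yd.
have : Rabs t * Rabs (y - x) <= (Rabs t + 1) * (eps / (2 * (Rabs t + 1))).
  by have := Rabs_pos t; have := Rabs_pos (y - x); nra.
have -> : (Rabs t + 1) * (eps / (2 * (Rabs t + 1))) = eps / 2 by field; lra.
rewrite -Rabs_mult Rmult_minus_distr_l.
have := Rle_abs (t * y - t * x); have := Rle_abs (- (t * y - t * x)).
rewrite Rabs_Ropp; lra.
Qed.

Lemma lsc_hom_margin (phi : R -> R -> R) t c :
  lsc_fun2 phi -> pos_homogeneous2 phi -> t < phi 0 1 -> - t < phi 0 (-1) ->
  (forall s, c + t * s < phi 1 s) ->
  exists eta, 0 < eta /\ forall sig s, 0 < sig -> (c + eta) * sig + t * s <= phi sig s.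
Proof.
move=> phi_lsc phi_hom t_lt1 t_lt2 c_lt.
have [S1 right_tail] := lsc_hom_superlinear (c + 1) phi_lsc phi_hom t_lt1.
have [S2 left_tail] := lsc_hom_superlinear (c + 1)
  (lsc_fun2_reflect phi_lsc) (pos_homogeneous2_reflect phi_hom) t_lt2.
set S := Rmax 0 (Rmax S1 S2).
have [S_ge0 [S_ge1 S_ge2]] : 0 <= S /\ S1 <= S /\ S2 <= S.
  have := Rmax_l 0 (Rmax S1 S2); have := Rmax_r 0 (Rmax S1 S2).
  by have := Rmax_l S1 S2; have := Rmax_r S1 S2; rewrite -/S; lra.
pose g s := phi 1 s - c - t * s.
have [eta [eta_gt0 eta_le]] : exists eta, 0 < eta /\ forall s, - S <= s <= S -> eta <= g s.
  apply: lsc_pos_lower_bound => [|s _|s _ eps]; first lra.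
    by rewrite /g; have := c_lt s; lra.
  exact: lsc_fun2_slice_affine.
have g_ge s : Rmin 1 eta <= g s.
  case: (Rlt_or_le S s) => [s_gt|s_le].
    by apply: Rle_trans (Rmin_l _ _) _; have := right_tail s ltac:(lra); rewrite /g; lra.
  case: (Rlt_or_le s (- S)) => [s_lt|s_ge]; last by apply: Rle_trans (Rmin_r _ _) _; apply: eta_le.
  apply: Rle_trans (Rmin_l _ _) _; have := left_tail (- s) ltac:(lra).
  by rewrite /g Ropp_involutive; lra.
exists (Rmin 1 eta); split=> [|sig s sig_gt0]; first by apply: Rmin_glb_lt; lra.
have -> : phi sig s = sig * phi 1 (s / sig) by rewrite -phi_hom; [congr phi; field|..]; lra.
have : sig * (c + Rmin 1 eta + t * (s / sig)) <= sig * phi 1 (s / sig).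
  by apply: Rmult_le_compat_l; have := g_ge (s / sig); rewrite /g; lra.
by have -> : sig * (c + Rmin 1 eta + t * (s / sig)) = (c + Rmin 1 eta) * sig + t * s by field; lra.
Qed.

Lemma pos_homogeneous_onto k (g : vec k -> R) : (0 < k)%N -> pos_homogeneous g ->
  positive_off_zero g -> forall s, 0 <= s -> exists a, g a = s.
Proof.
move=> k_gt0 g_hom g_pos s s_ge0.
case: (Req_dec s 0) => [->|s_neq0]; first by exists (@vzero k); apply: pos_homogeneous_zero.
pose e : vec k := fun i => if val i == 0%N then 1 else 0.
have e_neq0 : e <> @vzero k.
  by move=> /(f_equal (fun v => v (Ordinal k_gt0))); rewrite /e /vzero /=; lra.
have ge_gt0 := g_pos e e_neq0.
exists (vscal (s / g e) e); rewrite g_hom; first by field; lra.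
by apply: Rdiv_lt_0_compat; lra.
Qed.

Lemma convex_comb_lt a b P l : a < P -> b < P -> 0 <= l <= 1 -> l * a + (1 - l) * b < P.
Proof.
move=> aP bP [l_ge0 l_le1]; case: (Rle_lt_or_eq_dec 0 l l_ge0) => [l_gt0|<-]; last lra.
have : l * a < l * P by apply: Rmult_lt_compat_l.
have : (1 - l) * b <= (1 - l) * P by apply: Rmult_le_compat_l; lra.
lra.
Qed.

Lemma Rle_div_iff u v r : 0 < r -> u <= v / r <-> u * r <= v.
Proof.
move=> r_gt0; have vr : v / r * r = v by field; lra.
split=> H; first by rewrite -vr; apply: Rmult_le_compat_r; lra.
by apply: (Rmult_le_reg_r r) => //; rewrite vr.
Qed.

Section SymmetrizableSlices.
Variables (n : nat) (f : vec n.+1 -> R) (h : vec n -> R) (phi : R -> R -> R).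
Hypotheses (n_gt0 : (0 < n)%N) (f_hom : pos_homogeneous f) (h_hom : pos_homogeneous h)
  (h_pos : positive_off_zero h) (phi_lsc : lsc_fun2 phi)
  (f_phi : forall x : vec n.+1, f x = phi (h (xprime x)) (xlast x)).

Let K := Wulff f.

Lemma f_join a s : f (join a s) = phi (h a) s.
Proof. by rewrite f_phi xprime_join xlast_join. Qed.

Lemma phi_hom : pos_homogeneous2 phi.
Proof.
move=> l sig s l_gt0 sig_ge0.
have [a <-] := pos_homogeneous_onto n_gt0 h_hom h_pos sig_ge0.
by rewrite -h_hom // -!f_join join_scal f_hom.
Qed.

Lemma Wulff_join_iff w t : K (join w t) <->
  forall nu s, join nu s <> @vzero n.+1 -> dot w nu + t * s < phi (h nu) s.
Proof.
rewrite /K (Wulff_iff_dot_lt _ f_hom); split=> [Kwt nu s|Kwt nu].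
  by rewrite -dot_join -f_join; apply: Kwt.
by rewrite -(join_xprime_xlast nu) dot_join f_join; apply: Kwt.
Qed.

Definition on_axis t := K (join (@vzero n) t).

Lemma on_axis_iff t : on_axis t <->
  forall nu s, join nu s <> @vzero n.+1 -> t * s < phi (h nu) s.
Proof.
rewrite /on_axis Wulff_join_iff.
by split=> H nu s nu_s; have := H nu s nu_s; rewrite dot_zero_l Rplus_0_l.
Qed.

Lemma on_axis_lt t : on_axis t -> forall sig s, 0 < sig -> t * s < phi sig s.
Proof.
move=> /on_axis_iff t_ax sig s sig_gt0.
have [a ha] := pos_homogeneous_onto n_gt0 h_hom h_pos (Rlt_le _ _ sig_gt0).
have a_neq0 : a <> @vzero n by move=> a0; move: ha; rewrite a0 pos_homogeneous_zero //; lra.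
by rewrite -ha; apply: t_ax; apply: join_neq0_l.
Qed.

Lemma on_axis_lt0 t : on_axis t -> t < phi 0 1 /\ - t < phi 0 (-1).
Proof.
move=> /on_axis_iff t_ax; rewrite -(pos_homogeneous_zero h_hom).
have := t_ax (@vzero n) 1 (join_neq0_r (s := 1) ltac:(lra)).
have := t_ax (@vzero n) (-1) (join_neq0_r (s := -1) ltac:(lra)).
lra.
Qed.

Lemma Wulff_on_axis w t : K (join w t) -> on_axis t.
Proof.
move=> /Wulff_join_iff Kwt; apply/on_axis_iff => nu s nu_s.
case: (classic (nu = @vzero n)) => [nu0|nu_neq0].
  by have := Kwt nu s nu_s; rewrite nu0 dot_zero_r; lra.
case: (Rle_or_lt 0 (dot w nu)) => [w_nu|w_nu]; first by have := Kwt nu s nu_s; lra.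
have mnu_neq0 : vscal (-1) nu <> @vzero n.
  move=> mnu0; apply: nu_neq0.
  have -> : nu = vscal (-1) (vscal (-1) nu) by vec_ext; ring.
  by rewrite mnu0; vec_ext; ring.
have hnu := h_pos nu_neq0; have hmnu := h_pos mnu_neq0.
have r_gt0 : 0 < h nu / h (vscal (-1) nu) by apply: Rdiv_lt_0_compat.
set mu := vscal (h nu / h (vscal (-1) nu)) (vscal (-1) nu).
have h_mu : h mu = h nu by rewrite /mu h_hom //; field; lra.
have mu_neq0 : mu <> @vzero n by move=> mu0; move: h_mu; rewrite mu0 pos_homogeneous_zero //; lra.
have := Kwt mu s (join_neq0_l mu_neq0); rewrite h_mu /mu !dot_scal_r; nra.
Qed.

Definition slope_minorant t c :=
  0 <= c /\ forall sig s, 0 < sig -> c * sig + t * s <= phi sig s.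

Definition slice_scale t :=
  if excluded_middle_informative (on_axis t)
  then epsilon (inhabits 0) (is_lub (slope_minorant t)) else 0.

Lemma slice_scale_lub t : on_axis t -> is_lub (slope_minorant t) (slice_scale t).
Proof.
move=> t_ax; rewrite /slice_scale.
case: (excluded_middle_informative (on_axis t)) => [_|t_off] /=; last by [].
apply: epsilon_spec.
have bounded : bound (slope_minorant t).
  exists (phi 1 0) => c [_ c_min].
  by have := c_min 1 0 Rlt_0_1; lra.
have nonempty : exists c, slope_minorant t c.
  exists 0; split=> [|sig s sig_gt0]; first lra.
  by have := on_axis_lt t_ax s sig_gt0; lra.
by have [m m_lub] := completeness _ bounded nonempty; exists m.
Qed.

Lemma slice_scale_off_axis t : ~ on_axis t -> slice_scale t = 0.
Proof. by rewrite /slice_scale; case: (excluded_middle_informative (on_axis t)). Qed.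

Lemma slice_scale_spec t : on_axis t -> 0 < slice_scale t /\ slope_minorant t (slice_scale t).
Proof.
move=> t_ax; have [alpha_ub alpha_lub] := slice_scale_lub t_ax.
have [phi01 phi0m1] := on_axis_lt0 t_ax.
have zero_lt s : 0 + t * s < phi 1 s by rewrite Rplus_0_l; apply: (on_axis_lt t_ax); lra.
have [eta [eta_gt0 eta_min]] := lsc_hom_margin phi_lsc phi_hom phi01 phi0m1 zero_lt.
have : slope_minorant t (0 + eta) by split=> //; lra.
move=> /alpha_ub eta_le; split; first lra.
split=> [|sig s sig_gt0]; first lra.
have : slice_scale t <= (phi sig s - t * s) / sig.
  apply: alpha_lub => c [_ /(_ sig s sig_gt0) c_min].
  by apply/Rle_div_iff => //; lra.
by move/(Rle_div_iff _ _ sig_gt0); lra.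
Qed.

Lemma slice_scale_ge0 t : 0 <= slice_scale t.
Proof.
case: (classic (on_axis t)) => [/slice_scale_spec|/slice_scale_off_axis]; lra.
Qed.

Lemma on_axis_slice_scale t : slice_scale t <> 0 -> on_axis t.
Proof. by move=> alpha_neq0; apply: NNPP => /slice_scale_off_axis. Qed.

Lemma slice_scale_concave : concave_on_pos slice_scale.
Proof.
move=> s t l s_pos t_pos l01.
have s_ax := on_axis_slice_scale (Rgt_not_eq _ _ s_pos).
have t_ax := on_axis_slice_scale (Rgt_not_eq _ _ t_pos).
have st_ax : on_axis (l * s + (1 - l) * t).
  apply/on_axis_iff => nu r nu_r.
  have := proj1 (on_axis_iff s) s_ax nu r nu_r; have := proj1 (on_axis_iff t) t_ax nu r nu_r.
  by rewrite Rmult_plus_distr_r !Rmult_assoc => *; apply: convex_comb_lt.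
apply: (proj1 (slice_scale_lub st_ax)); split; first by nra.
have [_ [_ s_min]] := slice_scale_spec s_ax; have [_ [_ t_min]] := slice_scale_spec t_ax.
by move=> sig r sig_gt0; have := s_min sig r sig_gt0; have := t_min sig r sig_gt0; nra.
Qed.

Lemma slice_scale0_empty t : slice_scale t = 0 -> forall x', ~ slice K t x'.
Proof. by move=> alpha0 x' /Wulff_on_axis /slice_scale_spec []; lra. Qed.

Lemma slice_dot_lt t x' : slice K t x' ->
  forall nu, nu <> @vzero n -> dot x' nu < slice_scale t * h nu.
Proof.
move=> Kx' nu nu_neq0; have t_ax := Wulff_on_axis Kx'.
have hnu := h_pos nu_neq0; apply: Rnot_le_lt => alpha_le.
set beta := dot x' nu / h nu.
have alpha_beta : slice_scale t <= beta by apply/Rle_div_iff.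
have beta_lt s : beta + t * s < phi 1 s.
  have h_mu : h (vscal (/ h nu) nu) = 1 by rewrite h_hom; [field | apply: Rinv_0_lt_compat]; lra.
  have mu_neq0 : vscal (/ h nu) nu <> @vzero n.
    by move=> mu0; move: h_mu; rewrite mu0 pos_homogeneous_zero //; lra.
  have := proj1 (Wulff_join_iff x' t) Kx' _ s (join_neq0_l mu_neq0).
  by rewrite h_mu dot_scal_r /beta /Rdiv Rmult_comm.
have [phi01 phi0m1] := on_axis_lt0 t_ax.
have [eta [eta_gt0 eta_min]] := lsc_hom_margin phi_lsc phi_hom phi01 phi0m1 beta_lt.
have alpha_ge0 := slice_scale_ge0 t.
have : slope_minorant t (beta + eta) by split; [lra | exact: eta_min].
by move/(proj1 (slice_scale_lub t_ax)); lra.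
Qed.

Lemma slice_of_scaled t y : 0 < slice_scale t -> Wulff h y ->
  slice K t (vscal (slice_scale t) y).
Proof.
move=> alpha_gt0 Ky; have t_ax := on_axis_slice_scale (Rgt_not_eq _ _ alpha_gt0).
have [_ [_ alpha_min]] := slice_scale_spec t_ax.
apply/Wulff_join_iff => nu s nu_s.
case: (classic (nu = @vzero n)) => [nu0|nu_neq0].
  by rewrite nu0 dot_zero_r Rplus_0_l; apply: (proj1 (on_axis_iff t) t_ax); rewrite -nu0.
have := alpha_min (h nu) s (h_pos nu_neq0).
have := proj1 (Wulff_iff_dot_lt y h_hom) Ky nu nu_neq0.
by rewrite dot_scal_l; nra.
Qed.

Lemma symmetrizable_slices_scaled : exists alpha : R -> R,
  (forall t, 0 <= alpha t) /\ concave_on_pos alpha /\ slices_scaled K (Wulff h) alpha.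
Proof.
exists slice_scale; split; first exact: slice_scale_ge0.
split; first exact: slice_scale_concave.
split; first exact: slice_scale0_empty.
move=> t alpha_neq0 x'; have alpha_ge0 := slice_scale_ge0 t.
have alpha_gt0 : 0 < slice_scale t by lra.
split=> [Kx'|[y [Ky ->]]]; last exact: slice_of_scaled.
exists (vscal (/ slice_scale t) x'); split.
  apply/(Wulff_iff_dot_lt _ h_hom) => nu /(slice_dot_lt Kx') x'_nu.
  by rewrite dot_scal_l; apply: (Rmult_lt_reg_l (slice_scale t)) => //; field_simplify; lra.
by vec_ext; field; lra.
Qed.

End SymmetrizableSlices.

Section HorizontalRestriction.
Variables (n : nat) (f : vec n.+1 -> R).

Lemma lsc_fun_join0 : lsc_fun f -> lsc_fun (fun x => f (join x 0)).
Proof.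
move=> f_lsc x eps eps_gt0; have [d [d_gt0 near]] := f_lsc (join x 0) eps eps_gt0.
by exists d; split=> // y yx; apply: near; rewrite join_sub Rminus_0_r vnorm_join0.
Qed.

Lemma pos_homogeneous_join0 : pos_homogeneous f -> pos_homogeneous (fun x => f (join x 0)).
Proof. by move=> f_hom l x l_gt0 /=; rewrite -f_hom // -join_scal Rmult_0_r. Qed.

Lemma convex_fun_join0 : convex_fun f -> convex_fun (fun x => f (join x 0)).
Proof.
move=> f_cvx x y l l01 /=.
by have := join_lin l (1 - l) x y 0 0; rewrite !Rmult_0_r Rplus_0_r => ->; apply: f_cvx.
Qed.

Lemma positive_off_zero_join0 : positive_off_zero f -> positive_off_zero (fun x => f (join x 0)).
Proof. by move=> f_pos x x_neq0; apply/f_pos/join_neq0_l. Qed.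

Lemma lsc_fun2_line e : lsc_fun f -> lsc_fun2 (fun s t => f (join (vscal s e) t)).
Proof.
move=> f_lsc s t eps _ eps_gt0; have [d [d_gt0 near]] := f_lsc (join (vscal s e) t) eps eps_gt0.
have e_ge0 := sqrt_pos (dot e e); rewrite -/(vnorm e) in e_ge0.
have d'_gt0 : 0 < d / (vnorm e + 2) by apply: Rdiv_lt_0_compat; lra.
exists (d / (vnorm e + 2)); split=> // s' t' _ ds dt; apply: near.
have -> : vsub (join (vscal s' e) t') (join (vscal s e) t) = join (vscal (s' - s) e) (t' - t).
  by rewrite join_sub; congr join; vec_ext; ring.
apply: Rle_lt_trans (vnorm_join_le _ _) _; rewrite vnorm_scal.
have d_eq : d = d / (vnorm e + 2) * (vnorm e + 2) by field; lra.
move: ds dt d'_gt0 d_eq; set q := d / (vnorm e + 2).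
by have := Rabs_pos (s' - s); have := Rabs_pos (t' - t); nra.
Qed.

Lemma convex_fun2_line e : convex_fun f -> convex_fun2 (fun s t => f (join (vscal s e) t)).
Proof.
move=> f_cvx s1 t1 s2 t2 l _ _ l01 /=.
have -> : vscal (l * s1 + (1 - l) * s2) e = vadd (vscal l (vscal s1 e)) (vscal (1 - l) (vscal s2 e))
  by vec_ext; ring.
by rewrite join_lin; apply: f_cvx.
Qed.

End HorizontalRestriction.

Section ScaledSlicesSymmetrizable.
Variables (n : nat) (f : vec n.+1 -> R) (Kh : vec n -> Prop) (alpha : R -> R).
Hypotheses (f_cvx : convex_fun f) (f_hom : pos_homogeneous f) (f_pos : positive_off_zero f)
  (alpha_ge0 : forall t, 0 <= alpha t) (K_slices : slices_scaled (Wulff f) Kh alpha).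

Let K := Wulff f.
Let h x := f (join x 0).

Lemma Wulff_join_scaled w tau :
  K (join w tau) <-> 0 < alpha tau /\ exists u, Kh u /\ w = vscal (alpha tau) u.
Proof.
have [slice0 sliceE] := K_slices; split=> [Kw|[alpha_gt0 u_w]].
  have alpha_neq0 : alpha tau <> 0 by move=> /slice0 /(_ w).
  by split; [have := alpha_ge0 tau; lra | apply/sliceE].
by apply/(sliceE tau (Rgt_not_eq _ _ alpha_gt0)).
Qed.

Lemma f_join_ge tau u w t : 0 < alpha tau -> Kh u ->
  alpha tau * dot u w + tau * t <= f (join w t).
Proof.
move=> alpha_gt0 Ku.
have : K (join (vscal (alpha tau) u) tau) by apply/Wulff_join_scaled; split=> //; exists u.
by move=> /(Wulff_dot_le f_hom) /(_ (join w t)); rewrite dot_join dot_scal_l.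
Qed.

Lemma f_join_approx w t eps : 0 < eps -> exists tau u, 0 < alpha tau /\ Kh u /\
  f (join w t) - eps < alpha tau * dot u w + tau * t.
Proof.
move=> eps_gt0; have [y [Ky y_approx]] := Wulff_dot_approx f_cvx f_hom f_pos (join w t) eps_gt0.
move: Ky y_approx; rewrite -(join_xprime_xlast y) => /Wulff_join_scaled [alpha_gt0 [u [Ku ->]]].
by rewrite dot_join dot_scal_l => approx; exists (xlast y), u.
Qed.

(* If not, the normal [(z, 0)] would be bounded by [alpha(tau) (u.x - delta)] on all of [K],
   which the choice [eps = h(z) delta / (delta + |u.x|)] makes incompatible with [h z = h x]. *)
Lemma support_Kh_le x z u delta : h x = h z -> Kh u -> 0 < delta ->
  exists u', Kh u' /\ dot u x - delta < dot u' z.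
Proof.
move=> hxz Ku delta_gt0; apply: NNPP => no_u'.
have u'_le u' : Kh u' -> dot u' z <= dot u x - delta.
  by move=> Ku'; apply: Rnot_lt_le => lt; apply: no_u'; exists u'.
case: (classic (z = @vzero n)) => [z0|z_neq0].
  have x0 : x = @vzero n.
    apply: NNPP => /(join_neq0_l (s := 0)) /f_pos; rewrite -/(h x) hxz /h z0 join_zero.
    by rewrite pos_homogeneous_zero //; lra.
  by have := u'_le u Ku; rewrite x0 z0 !dot_zero_r; lra.
have hz_gt0 : 0 < h z by apply/f_pos/join_neq0_l.
set c := dot u x; have c_le := Rle_abs c; have C_ge0 := Rabs_pos c.
set eps := h z * delta / (delta + Rabs c).
have eps_gt0 : 0 < eps by apply: Rdiv_lt_0_compat; nra.
have eps_eq : eps * (delta + Rabs c) = h z * delta by rewrite /eps; field; lra.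
have [tau [u' [alpha_gt0 [Ku' approx]]]] := f_join_approx z 0 eps_gt0.
have := u'_le u' Ku'; have := f_join_ge x 0 alpha_gt0 Ku; rewrite -/c -/(h x) hxz.
move: approx; rewrite Rmult_0_r !Rplus_0_r -/(h z) => approx hx u'_z.
have : alpha tau * dot u' z <= alpha tau * (c - delta) by apply: Rmult_le_compat_l; lra.
move=> scaled; have small : alpha tau * delta < eps by lra.
have : h z - eps < alpha tau * Rabs c by nra.
move=> /(Rmult_lt_compat_r delta _ _ delta_gt0).
have : alpha tau * delta * Rabs c <= eps * Rabs c by apply: Rmult_le_compat_r; lra.
nra.
Qed.

Lemma f_join_le x z t : h x = h z -> f (join x t) <= f (join z t).
Proof.
move=> hxz; apply: Rle_plus_epsilon => eps eps_gt0.
have [tau [u [alpha_gt0 [Ku approx]]]] := f_join_approx x t (ltac:(lra) : 0 < eps / 2).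
have delta_gt0 : 0 < eps / (2 * alpha tau) by apply: Rdiv_lt_0_compat; lra.
have [u' [Ku' u'_z]] := support_Kh_le hxz Ku delta_gt0.
have := f_join_ge z t alpha_gt0 Ku'.
have : alpha tau * (dot u x - eps / (2 * alpha tau)) < alpha tau * dot u' z
  by apply: Rmult_lt_compat_l.
have -> : alpha tau * (dot u x - eps / (2 * alpha tau)) = alpha tau * dot u x - eps / 2
  by field; lra.
lra.
Qed.

Lemma scaled_slices_symmetrizable : (0 < n)%N -> lsc_fun f -> nonneg_fun f -> symmetrizable f.
Proof.
move=> n_gt0 f_lsc f_ge0.
have h_hom : pos_homogeneous h := pos_homogeneous_join0 f_hom.
have h_pos : positive_off_zero h := positive_off_zero_join0 f_pos.
have [e he] := pos_homogeneous_onto n_gt0 h_hom h_pos (Rle_0_1).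
have h_line s : 0 <= s -> h (vscal s e) = s.
  case/Rle_lt_or_eq_dec => [s_gt0|<-]; first by rewrite h_hom // he Rmult_1_r.
  have -> : vscal 0 e = @vzero n by vec_ext; ring.
  exact: pos_homogeneous_zero.
do 4 (split=> //); exists h, (fun s t => f (join (vscal s e) t)).
split; first exact: lsc_fun_join0.
split; first by move=> x; apply: f_ge0.
split; first exact: h_hom.
split; first exact: convex_fun_join0.
split; first exact: h_pos.
split; first exact: lsc_fun2_line.
split; first by move=> *; apply: f_ge0.
split; first exact: convex_fun2_line.
move=> x; rewrite -{1}(join_xprime_xlast x); apply: Rle_antisym; apply: f_join_le;
  by rewrite h_line //; apply: f_ge0.
Qed.

End ScaledSlicesSymmetrizable.

Local Close Scope R_scope.
Unset Implicit Arguments.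

Theorem mainTheorem1 (n : nat) (Hn : (1 <= n)%N) :
  (forall (f : vec n.+1 -> R) (h : vec n -> R) (phi : R -> R -> R),
     symmetrizable f ->
     lsc_fun h -> nonneg_fun h -> pos_homogeneous h -> convex_fun h ->
     positive_off_zero h ->
     lsc_fun2 phi -> nonneg_fun2 phi -> convex_fun2 phi ->
     (forall x : vec n.+1, f x = phi (h (xprime x)) (xlast x)) ->
     exists alpha : R -> R,
       (forall t, Rle 0 (alpha t)) /\ concave_on_pos alpha /\
       slices_scaled (Wulff f) (Wulff h) alpha)
  /\
  (forall (f : vec n.+1 -> R),
     lsc_fun f -> convex_fun f -> pos_homogeneous f -> nonneg_fun f ->
     positive_off_zero f ->
     forall (Kh : vec n -> Prop) (alpha : R -> R),
       open_vset Kh -> convex_vset Kh ->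
       (forall t, Rle 0 (alpha t)) -> concave_on_pos alpha ->
       slices_scaled (Wulff f) Kh alpha ->
       symmetrizable f).
Proof.
split.
- move=> f h phi [_ [_ [f_hom _]]] _ _ h_hom _ h_pos phi_lsc _ _ f_phi.
  exact: (symmetrizable_slices_scaled Hn f_hom h_hom h_pos phi_lsc f_phi).
- move=> f f_lsc f_cvx f_hom f_ge0 f_pos Kh alpha _ _ alpha_ge0 _ K_slices.
  exact: (scaled_slices_symmetrizable f_cvx f_hom f_pos alpha_ge0 K_slices Hn f_lsc f_ge0).
Qed.
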